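(* Let $G$ be a finite group, $H$ a nontrivial core-free subgroup, $\Omega=G/H$, $n=|G:H|$ and $\chi$ the permutation character of $G$ on $\Omega$. For a positive integer $t$ let $$Q(G,t)=\sum_{i=1}^k|x_i^G|\left(\frac{\chi(x_i)}{n}\right)^t,$$ where $x_1,\dots,x_k$ represent the conjugacy classes of elements of prime order in $G$. If $Q(G,t)<1$ then $d_G(H)\leqslant 2t-1$; in particular, if $Q(G,2)<1$ then $d_G(H)=3$.
   Context: Depth: for a finite group $G$, a subgroup $H$ and $m\geqslant 1$, let $(\mathbb{C}G)^{\otimes m}=\mathbb{C}G\otimes_{\mathbb{C}H}\cdots\otimes_{\mathbb{C}H}\mathbb{C}G$ ($m$ factors). For $n\geqslant 1$, the inclusion $\mathbb{C}H\subseteq\mathbb{C}G$ has depth $2n$ if $(\mathbb{C}G)^{\otimes(n+1)}$ is isomorphic, as a $(\mathbb{C}G,\mathbb{C}H)$-bimodule, to a direct summand of $\bigoplus_{i=1}^k(\mathbb{C}G)^{\otimes n}$ for some $k\geqslant 1$; it has depth $2n+1$ if the same holds for $(\mathbb{C}H,\mathbb{C}H)$-bimodules; it has depth $1$ if $\mathbb{C}G$ is isomorphic as a $(\mathbb{C}H,\mathbb{C}H)$-bimodule to a direct summand of $\bigoplus_{i=1}^k\mathbb{C}H$ for some $k\geqslant1$. The depth $d_G(H)$ is the least positive integer $n$ such that the inclusion has depth $n$. $H$ is core-free if $\bigcap_{g\in G}H^g=1$. *)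

From HB Require Import structures.
From mathcomp Require Import all_boot all_order all_algebra all_fingroup all_field.
Set Implicit Arguments. Unset Strict Implicit. Unset Printing Implicit Defensive.
Import GRing.Theory Num.Theory.
Local Open Scope ring_scope.

(* A finite set S : {set T} together with a map act : T -> T yields    *)
(* the (row-convention) matrix of the linear extension of act on CS,   *)
Definition actmx (T : finType) (S : {set T}) (act : T -> T) : 'M[algC]_#|S| :=
  \matrix_(i < #|S|, j < #|S|) ((act (enum_val i) == enum_val j)%:R : algC).

(* M : CS -> CS' (v |-> v *m M) is a (CA,CB)-bimodule homomorphism, where
   a in A acts on the left via lS a / lS' a and b in B acts on the right
   via rS ^~ b / rS' ^~ b. *)
Definition is_bihom (gT : finGroupType) (A B : {set gT})
  (T : finType) (S : {set T}) (lS : gT -> T -> T) (rS : T -> gT -> T)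
  (T' : finType) (S' : {set T'}) (lS' : gT -> T' -> T') (rS' : T' -> gT -> T')
  (M : 'M[algC]_(#|S|, #|S'|)) : Prop :=
  (forall a, a \in A -> actmx S (lS a) *m M = M *m actmx S' (lS' a)) /\
  (forall b, b \in B -> actmx S (rS^~ b) *m M = M *m actmx S' (rS'^~ b)).

(* CS is isomorphic, as a (CA,CB)-bimodule, to a direct summand of the
   direct sum of k copies of CS': there are bimodule maps
   i = (f_1,...,f_k) : CS -> (CS')^k and p = (p_1;...;p_k) : (CS')^k -> CS
   with p o i = id. *)
Definition is_summand_of_copies (gT : finGroupType) (A B : {set gT})
  (T : finType) (S : {set T}) (lS : gT -> T -> T) (rS : T -> gT -> T)
  (T' : finType) (S' : {set T'}) (lS' : gT -> T' -> T') (rS' : T' -> gT -> T')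
  (k : nat) : Prop :=
  exists (f : 'I_k -> 'M[algC]_(#|S|, #|S'|)) (p : 'I_k -> 'M[algC]_(#|S'|, #|S|)),
    [/\ forall j, is_bihom A B lS rS lS' rS' (f j),
        forall j, is_bihom A B lS' rS' lS rS (p j)
      & \sum_(j < k) (f j *m p j) = 1%:M].

(* The m-fold tensor power CG (x)_{CH} ... (x)_{CH} CG.                *)
(* It is the linearization of G x_H G x_H ... x_H G, i.e. of the set   *)
(* of orbits of H^(m-1) on G^m acting by                               *)
(*   (t_0,...,t_{m-1}) |-> (t_0 h_1, h_1^-1 t_1 h_2, ..., h_{m-1}^-1 t_{m-1}) *)
(* (the class of (t_0,...,t_{m-1}) is the basis vector                 *)
(* t_0 (x) ... (x) t_{m-1}); G acts on the left on the first factor,   *)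
(* H on the right on the last one.                                     *)
Section TensorPower.
Variables (gT : finGroupType) (G H : {set gT}) (m : nat).

Definition twist (h : {ffun 'I_m.+1 -> gT}) (t : {ffun 'I_m -> gT}) :
    {ffun 'I_m -> gT} :=
  [ffun i : 'I_m => ((h (widen_ord (leqnSn m) i))^-1 * t i * h (lift ord0 i))%g].

Definition twisters : {set {ffun 'I_m.+1 -> gT}} :=
  [set h : {ffun 'I_m.+1 -> gT} |
     [&& h ord0 == 1%g, h ord_max == 1%g & [forall i, h i \in H]]].

Definition tclass (t : {ffun 'I_m -> gT}) : {set {ffun 'I_m -> gT}} :=
  [set twist h t | h in twisters].

Definition tbase : {set {ffun 'I_m -> gT}} :=
  [set t : {ffun 'I_m -> gT} | [forall i, t i \in G]].

Definition tpow : {set {set {ffun 'I_m -> gT}}} := [set tclass t | t in tbase].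

Definition tlmul (g : gT) (t : {ffun 'I_m -> gT}) : {ffun 'I_m -> gT} :=
  [ffun i : 'I_m => if val i == 0%N then (g * t i)%g else t i].

Definition trmul (t : {ffun 'I_m -> gT}) (h : gT) : {ffun 'I_m -> gT} :=
  [ffun i : 'I_m => if val i == m.-1 then (t i * h)%g else t i].

Definition tpow_l (g : gT) (c : {set {ffun 'I_m -> gT}}) := tlmul g @: c.
Definition tpow_r (c : {set {ffun 'I_m -> gT}}) (h : gT) := (trmul ^~ h) @: c.

End TensorPower.

Definition lmulg (gT : finGroupType) (g x : gT) : gT := (g * x)%g.
Definition rmulg (gT : finGroupType) (x g : gT) : gT := (x * g)%g.

Definition has_depth (gT : finGroupType) (G H : {group gT}) (d : nat) : Prop :=
  (* depth 1: CG | (CH)^k as (CH,CH)-bimodules *)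
  (d = 1%N /\ exists2 k, (0 < k)%N &
     @is_summand_of_copies gT H H gT G (@lmulg gT) (@rmulg gT)
                              gT H (@lmulg gT) (@rmulg gT) k) \/
  (* depth 2n: CG^(n+1) | (CG^n)^k as (CG,CH)-bimodules *)
  (exists n, [/\ (0 < n)%N, d = n.*2 & exists2 k, (0 < k)%N &
     @is_summand_of_copies gT G H
       _ (tpow G H n.+1) (@tpow_l gT n.+1) (@tpow_r gT n.+1)
       _ (tpow G H n) (@tpow_l gT n) (@tpow_r gT n) k]) \/
  (* depth 2n+1: CG^(n+1) | (CG^n)^k as (CH,CH)-bimodules *)
  (exists n, [/\ (0 < n)%N, d = n.*2.+1 & exists2 k, (0 < k)%N &
     @is_summand_of_copies gT H H
       _ (tpow G H n.+1) (@tpow_l gT n.+1) (@tpow_r gT n.+1)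
       _ (tpow G H n) (@tpow_l gT n) (@tpow_r gT n) k]).

Definition permchar (gT : finGroupType) (G H : {set gT}) (x : gT) : nat :=
  #|[set Hy in rcosets H G | (Hy :* x)%g == Hy]|.

Definition Qsum (gT : finGroupType) (G H : {group gT}) (t : nat) : rat :=
  \sum_(xG in classes G | prime #[repr xG]%g)
     (#|xG|%:R * ((permchar G H (repr xG))%:R / (#|G : H|%g)%:R) ^+ t).

(** If [Q(G,t) < 1], the t-tuples of points of [Omega] fixed by some element
    of prime order number fewer than [n^t], so some t-tuple of cosets
    [H y_1, ..., H y_t] has trivial pointwise stabiliser (a base of size t).
    The elements [y_i y_1^-1 (y_(i+1) y_1^-1)^-1] then form a basis element of
    the t-th tensor power [CG^(t)] on which [H x H] acts freely, and a biset
    with a free [H x H]-orbit contains every [(H,H)]-biset as a direct summand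
    of copies of itself; hence [CG^(t)] is a summand of copies of [CG^(t-1)]
    and the depth is at most [2t-1].  Depths 1 and 2 are excluded because a
    nontrivial core-free subgroup is not normal: some [h \in H] is conjugated
    out of [H], which is detected by an element commuting with all bimodule
    maps that vanishes on the smaller bimodule but not on the larger one. *)

From HB Require Import structures.
From mathcomp Require Import all_boot all_order all_algebra all_fingroup all_field.
From mathcomp Require Import all_solvable.
From mathcomp Require classfun.
Import GRing.Theory Num.Theory Order.TTheory.
Set Implicit Arguments. Unset Strict Implicit. Unset Printing Implicit Defensive.

Section TensorPowerActions.
Variables (gT : finGroupType) (G H : {group gT}) (m : nat).
Implicit Types (t : {ffun 'I_m -> gT}) (c : {set {ffun 'I_m -> gT}}).
Local Open Scope group_scope.

Lemma tlmul1 t : tlmul 1 t = t.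
Proof. by apply/ffunP=> i; rewrite ffunE; case: ifP; rewrite ?mul1g. Qed.

Lemma tlmulM a b t : tlmul (a * b) t = tlmul a (tlmul b t).
Proof. by apply/ffunP=> i; rewrite !ffunE; case: ifP; rewrite ?mulgA. Qed.

Lemma trmul1 t : trmul t 1 = t.
Proof. by apply/ffunP=> i; rewrite ffunE; case: ifP; rewrite ?mulg1. Qed.

Lemma trmulM a b t : trmul t (a * b) = trmul (trmul t a) b.
Proof. by apply/ffunP=> i; rewrite !ffunE; case: ifP; rewrite ?mulgA. Qed.

Lemma tlmul_trmul a b t : tlmul a (trmul t b) = trmul (tlmul a t) b.
Proof. by apply/ffunP=> i; rewrite !ffunE; do 2 case: ifP; rewrite ?mulgA. Qed.

Lemma tpow_l1 c : tpow_l 1 c = c.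
Proof. by rewrite /tpow_l (eq_imset _ tlmul1) imset_id. Qed.

Lemma tpow_lM a b c : tpow_l (a * b) c = tpow_l a (tpow_l b c).
Proof. by rewrite /tpow_l -imset_comp; apply: eq_imset => t; rewrite /= tlmulM. Qed.

Lemma tpow_r1 c : tpow_r c 1 = c.
Proof. by rewrite /tpow_r (eq_imset _ (@trmul1)) imset_id. Qed.

Lemma tpow_rM a b c : tpow_r c (a * b) = tpow_r (tpow_r c a) b.
Proof. by rewrite /tpow_r -imset_comp; apply: eq_imset => t; rewrite /= trmulM. Qed.

Lemma tpow_l_r a b c : tpow_l a (tpow_r c b) = tpow_r (tpow_l a c) b.
Proof.
by rewrite /tpow_l /tpow_r -!imset_comp; apply: eq_imset => t; rewrite /= tlmul_trmul.
Qed.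

Lemma tlmul_twist k a t : k \in twisters H m ->
  tlmul a (twist k t) = twist k (tlmul a t).
Proof.
rewrite inE => /and3P[/eqP k0 _ _]; apply/ffunP=> i; rewrite !ffunE.
case: ifP => // /eqP i0.
have -> : widen_ord (leqnSn m) i = ord0 by apply: val_inj.
by rewrite k0 invg1 !mul1g mulgA.
Qed.

Lemma trmul_twist k a t : k \in twisters H m ->
  trmul (twist k t) a = twist k (trmul t a).
Proof.
rewrite inE => /and3P[_ /eqP km _]; apply/ffunP=> i; rewrite !ffunE.
case: ifP => // /eqP i0.
have -> : lift ord0 i = ord_max.
  by apply: val_inj; rewrite /= /bump /= i0 add1n prednK // (leq_ltn_trans _ (ltn_ord i)).
by rewrite km !mulg1 mulgA.
Qed.

Lemma tpow_l_tclass a t : tpow_l a (tclass H t) = tclass H (tlmul a t).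
Proof.
rewrite /tpow_l /tclass -imset_comp; apply: eq_in_imset => k kT.
by rewrite /= tlmul_twist.
Qed.

Lemma tpow_r_tclass a t : tpow_r (tclass H t) a = tclass H (trmul t a).
Proof.
rewrite /tpow_r /tclass -imset_comp; apply: eq_in_imset => k kT.
by rewrite /= trmul_twist.
Qed.

Lemma twisters_const1 : [ffun _ => 1] \in twisters H m.
Proof. by rewrite inE !ffunE !eqxx /=; apply/forallP => i; rewrite ffunE group1. Qed.

Lemma twist_const1 t : twist [ffun _ => 1] t = t.
Proof. by apply/ffunP=> i; rewrite !ffunE invg1 mul1g mulg1. Qed.

Lemma tclass_refl t : t \in tclass H t.
Proof. by apply/imsetP; exists [ffun _ => 1]; rewrite ?twisters_const1 ?twist_const1. Qed.

Hypothesis sHG : H \subset G.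

Lemma mem_tpow_l a c : a \in G -> c \in tpow G H m -> tpow_l a c \in tpow G H m.
Proof.
move=> aG /imsetP[t tB ->]; rewrite tpow_l_tclass; apply: imset_f.
move: tB; rewrite !inE => /forallP tB; apply/forallP => i; rewrite ffunE.
by case: ifP; rewrite ?groupM.
Qed.

Lemma mem_tpow_r a c : a \in H -> c \in tpow G H m -> tpow_r c a \in tpow G H m.
Proof.
move=> /(subsetP sHG) aG /imsetP[t tB ->]; rewrite tpow_r_tclass; apply: imset_f.
move: tB; rewrite !inE => /forallP tB; apply/forallP => i; rewrite ffunE.
by case: ifP; rewrite ?groupM.
Qed.

End TensorPowerActions.

Section SetMatrices.
Local Open Scope ring_scope.

Lemma sum_delta_mul (U : finType) (A : {pred U}) (u : U) (F : U -> algC) :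
  u \in A -> \sum_(w in A) (u == w)%:R * F w = F u.
Proof.
move=> uA; rewrite (bigD1 u) //= eqxx mul1r big1 ?addr0 // => w /andP[_ nw].
by rewrite eq_sym (negPf nw) mul0r.
Qed.

Lemma sum_delta (U : finType) (A : {pred U}) (u : U) :
  \sum_(w in A) ((u == w)%:R : algC) = (u \in A)%:R.
Proof.
have [uA | uA] := boolP (u \in A).
  rewrite (eq_bigr (fun w => (u == w)%:R * (fun=> 1) w)) ?sum_delta_mul //.
  by move=> w _; rewrite mulr1.
by rewrite big1 // => w wA; case: eqP => // uw; rewrite uw wA in uA.
Qed.

Definition setmx (T T' : finType) (S : {set T}) (S' : {set T'}) (F : T -> T' -> algC) :
  'M[algC]_(#|S|, #|S'|) := \matrix_(i, j) F (enum_val i) (enum_val j).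

Variables (T T' T'' : finType) (S : {set T}) (S' : {set T'}) (S'' : {set T''}).

Lemma actmxE act : actmx S act = setmx S S (fun z w => (act z == w)%:R).
Proof. by []. Qed.

Lemma mul_actmx_setmx act F : {in S, forall z, act z \in S} ->
  actmx S act *m setmx S S' F = setmx S S' (fun z w => F (act z) w).
Proof.
move=> actS; apply/matrixP=> i j; rewrite !mxE.
rewrite (eq_bigr (fun k => (act (enum_val i) == enum_val k)%:R * F (enum_val k) (enum_val j)))
  => [|k _]; last by rewrite !mxE.
by rewrite -(big_enum_val (A := mem S) (fun w => (act (enum_val i) == w)%:R * F w (enum_val j))) /=
           sum_delta_mul // actS // enum_valP.
Qed.

Lemma mul_setmx_actmx act inv F : {in S', forall w, inv w \in S'} ->
  (forall x w, (act x == w) = (x == inv w)) ->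
  setmx S S' F *m actmx S' act = setmx S S' (fun z w => F z (inv w)).
Proof.
move=> invS actE; apply/matrixP=> i j; rewrite !mxE.
rewrite (eq_bigr (fun k => (inv (enum_val j) == enum_val k)%:R * F (enum_val i) (enum_val k)))
  => [|k _]; last by rewrite !mxE actE eq_sym mulrC.
by rewrite -(big_enum_val (A := mem S') (fun w => (inv (enum_val j) == w)%:R * F (enum_val i) w)) /=
           sum_delta_mul // invS // enum_valP.
Qed.

Lemma mul_setmx F F' :
  setmx S S' F *m setmx S' S'' F' = setmx S S'' (fun z u => \sum_(w in S') F z w * F' w u).
Proof.
apply/matrixP=> i j; rewrite !mxE.
rewrite (big_enum_val (A := mem S') (fun w => F (enum_val i) w * F' w (enum_val j))) /=.
by apply: eq_bigr => k _; rewrite !mxE.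
Qed.

Lemma eq_in_setmx F F' :
  {in S & S', forall z w, F z w = F' z w} -> setmx S S' F = setmx S S' F'.
Proof. by move=> eqF; apply/matrixP=> i j; rewrite !mxE eqF ?enum_valP. Qed.

Lemma setmx_delta : setmx S S (fun z w => (z == w)%:R) = 1%:M.
Proof. by apply/matrixP=> i j; rewrite !mxE (inj_eq enum_val_inj). Qed.

End SetMatrices.

Section ActionLaws.
Variables (gT : finGroupType) (T : eqType).
Local Open Scope group_scope.

Section Left.
Variable l : gT -> T -> T.
Hypotheses (l1 : forall z, l 1 z = z) (lM : forall a b z, l (a * b) z = l a (l b z)).

Lemma lactK a : cancel (l a) (l a^-1).
Proof. by move=> z; rewrite -lM mulVg l1. Qed.

Lemma lactVK a : cancel (l a^-1) (l a).
Proof. by move=> z; rewrite -lM mulgV l1. Qed.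

Lemma eq_lact a u z : (l a u == z) = (u == l a^-1 z).
Proof. by apply/eqP/eqP => [<-|->]; rewrite ?lactK ?lactVK. Qed.

End Left.

Section Right.
Variable r : T -> gT -> T.
Hypotheses (r1 : forall z, r z 1 = z) (rM : forall a b z, r z (a * b) = r (r z a) b).

Lemma ractK a : cancel (r^~ a) (r^~ a^-1).
Proof. by move=> z; rewrite -rM mulgV r1. Qed.

Lemma ractVK a : cancel (r^~ a^-1) (r^~ a).
Proof. by move=> z; rewrite -rM mulVg r1. Qed.

Lemma eq_ract a u z : (r u a == z) = (u == r z a^-1).
Proof. by apply/eqP/eqP => [<-|->]; rewrite ?ractK ?ractVK. Qed.

End Right.

End ActionLaws.

Section FreeOrbitSummand.
Local Open Scope ring_scope.
Variables (gT : finGroupType) (H : {group gT}).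
Variables (T T' : finType) (S : {set T}) (S' : {set T'}).
Variables (l : gT -> T -> T) (r : T -> gT -> T) (l' : gT -> T' -> T') (r' : T' -> gT -> T').
Hypotheses (l1 : forall z, l 1%g z = z) (lM : forall a b z, l (a * b)%g z = l a (l b z)).
Hypotheses (r1 : forall z, r z 1%g = z) (rM : forall a b z, r z (a * b)%g = r (r z a) b).
Hypothesis lr : forall a b z, l a (r z b) = r (l a z) b.
Hypotheses (l1' : forall z, l' 1%g z = z) (lM' : forall a b z, l' (a * b)%g z = l' a (l' b z)).
Hypotheses (r1' : forall z, r' z 1%g = z) (rM' : forall a b z, r' z (a * b)%g = r' (r' z a) b).
Hypothesis lr' : forall a b z, l' a (r' z b) = r' (l' a z) b.
Hypotheses (lS : forall a z, a \in H -> z \in S -> l a z \in S)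
           (rS : forall a z, a \in H -> z \in S -> r z a \in S).
Hypotheses (lS' : forall a z, a \in H -> z \in S' -> l' a z \in S')
           (rS' : forall a z, a \in H -> z \in S' -> r' z a \in S').
Variable y0 : T'.
Hypothesis y0S : y0 \in S'.
Hypothesis free_y0 :
  forall a b, a \in H -> b \in H -> l' a (r' y0 b) = y0 -> a = 1%g /\ b = 1%g.

Let act a b x := r (l a x) b.
Let act' a b y := r' (l' a y) b.

(* Averaging over the [H x H]-orbit of [(x, y0)] makes [pair_count x] a
   bimodule map; freeness of the orbit of [y0] makes these maps orthogonal. *)
Definition pair_count x z w : algC :=
  \sum_(a in H) \sum_(b in H) ((act a b x == z) && (act' a b y0 == w))%:R.

Lemma pair_count_lact x c z w : c \in H ->
  pair_count x (l c z) w = pair_count x z (l' c^-1%g w).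
Proof.
move=> cH; rewrite /pair_count (reindex_inj (mulgI c)) /=.
rewrite (eq_bigl (mem H)) => [|a]; last by rewrite /= groupMl.
apply: eq_bigr => a aH; apply: eq_bigr => b bH; rewrite /act /act' lM lM'.
by rewrite -(lr c) -(lr' c) (eq_lact l1 lM) (eq_lact l1' lM') lactK.
Qed.

Lemma pair_count_ract x c z w : c \in H ->
  pair_count x (r z c) w = pair_count x z (r' w c^-1%g).
Proof.
move=> cH; rewrite /pair_count; apply: eq_bigr => a aH.
rewrite (reindex_inj (mulIg c)) /= (eq_bigl (mem H)) => [|b]; last by rewrite /= groupMr.
apply: eq_bigr => b bH.
by rewrite /act /act' rM rM' (eq_ract r1 rM) (eq_ract r1' rM') ractK.
Qed.

Lemma free_orbit_eq a b a' b' : a \in H -> b \in H -> a' \in H -> b' \in H ->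
  (act' a' b' y0 == act' a b y0) = (a == a') && (b == b').
Proof.
move=> aH bH a'H b'H; apply/eqP/andP => [e|[/eqP-> /eqP->]] //.
have : l' (a^-1 * a')%g (r' y0 (b' * b^-1)%g) = y0.
  by rewrite lM' rM' (lr' a') (lr' a') -/(act' a' b' y0) e /act' ractK ?lactK.
case/free_y0; rewrite ?groupM ?groupV // => e1 e2; split.
  by rewrite -[a']mul1g -(mulgV a) -mulgA e1 mulg1.
by rewrite -[b']mulg1 -(mulVg b) mulgA e2 mul1g.
Qed.

Lemma pair_count_orbit x z a b : a \in H -> b \in H ->
  pair_count x z (act' a b y0) = (act a b x == z)%:R.
Proof.
move=> aH bH; rewrite /pair_count (eq_bigr (fun a' => (a == a')%:R *
   \sum_(b' in H) (b == b')%:R * (act a' b' x == z)%:R)); last first.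
  move=> a' a'H; rewrite mulr_sumr; apply: eq_bigr => b' b'H; rewrite free_orbit_eq //.
  by case: (a == a'); case: (b == b'); case: (act a' b' x == z); rewrite ?mul1r ?mul0r ?andbF.
by rewrite !sum_delta_mul.
Qed.

Lemma pair_count_orthogonal z z' : z \in S -> z' \in S ->
  \sum_(x in S) \sum_(w in S') pair_count x z w * pair_count x z' w
    = (#|H| * #|H|)%:R * (z == z')%:R.
Proof.
move=> zS z'S.
transitivity (\sum_(x in S) \sum_(a in H) \sum_(b in H)
                 ((act a b x == z)%:R * (act a b x == z')%:R : algC)).
  apply: eq_bigr => x xS.
  rewrite (eq_bigr (fun w => \sum_(a in H) \sum_(b in H)
        (act' a b y0 == w)%:R * ((act a b x == z)%:R * pair_count x z' w))); last first.
    move=> w wS; rewrite /pair_count mulr_suml; apply: eq_bigr => a aH.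
    rewrite mulr_suml; apply: eq_bigr => b bH.
    by case: (act' a b y0 == w); case: (act a b x == z); rewrite ?mul1r ?mul0r.
  rewrite exchange_big; apply: eq_bigr => a aH.
  rewrite exchange_big; apply: eq_bigr => b bH.
  by rewrite sum_delta_mul ?pair_count_orbit // /act' rS' ?lS'.
rewrite exchange_big /= (eq_bigr (fun a => \sum_(b in H) ((z == z')%:R : algC))).
  by rewrite !sumr_const -mulrnA mulr_natl.
move=> a aH; rewrite exchange_big; apply: eq_bigr => b bH.
rewrite (eq_bigr (fun x => (l a^-1%g (r z b^-1%g) == x)%:R * (act a b x == z')%:R)).
  by rewrite sum_delta_mul /act ?lactVK ?ractVK // lS ?rS ?groupV.
by move=> x _; rewrite /act (eq_ract r1 rM) (eq_lact l1 lM) eq_sym.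
Qed.

Let inj_mx x := setmx S S' (fun z w => ((#|H| * #|H|)%:R)^-1 * pair_count x z w).
Let proj_mx x := setmx S' S (fun w z => pair_count x z w).

Lemma inj_mx_bihom x : is_bihom H H l r l' r' (inj_mx x).
Proof.
split=> c cH; rewrite /inj_mx.
  rewrite mul_actmx_setmx; last by move=> z zS; apply: lS.
  rewrite (@mul_setmx_actmx _ _ _ _ _ (l' c^-1%g)); last exact: eq_lact.
    by apply: eq_in_setmx => z w _ _; rewrite pair_count_lact.
  by move=> w wS; rewrite lS' ?groupV.
rewrite mul_actmx_setmx; last by move=> z zS; apply: rS.
rewrite (@mul_setmx_actmx _ _ _ _ _ (r'^~ c^-1%g)); last exact: eq_ract.
  by apply: eq_in_setmx => z w _ _; rewrite pair_count_ract.
by move=> w wS; rewrite rS' ?groupV.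
Qed.

Lemma proj_mx_bihom x : is_bihom H H l' r' l r (proj_mx x).
Proof.
split=> c cH; rewrite /proj_mx.
  rewrite mul_actmx_setmx; last by move=> w wS; apply: lS'.
  rewrite (@mul_setmx_actmx _ _ _ _ _ (l c^-1%g)); last exact: eq_lact.
    apply: eq_in_setmx => w z _ _.
    by rewrite -{1}(lactVK l1 lM c z) pair_count_lact // lactK.
  by move=> z zS; rewrite lS ?groupV.
rewrite mul_actmx_setmx; last by move=> w wS; apply: rS'.
rewrite (@mul_setmx_actmx _ _ _ _ _ (r^~ c^-1%g)); last exact: eq_ract.
  apply: eq_in_setmx => w z _ _.
  by rewrite -{1}(ractVK r1 rM c z) pair_count_ract // ractK.
by move=> z zS; rewrite rS ?groupV.
Qed.

Lemma sum_inj_proj_mx : \sum_(j < #|S|) (inj_mx (enum_val j) *m proj_mx (enum_val j)) = 1%:M.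
Proof.
rewrite -setmx_delta.
transitivity (setmx S S (fun z z' => \sum_(j < #|S|) \sum_(w in S')
    ((#|H| * #|H|)%:R)^-1 * pair_count (enum_val j) z w * pair_count (enum_val j) z' w)).
  apply/matrixP => i i'; rewrite summxE !mxE; apply: eq_bigr => j _.
  by rewrite /inj_mx /proj_mx mul_setmx !mxE.
apply: eq_in_setmx => z z' zS z'S.
rewrite -(big_enum_val (A := mem S) (fun x => \sum_(w in S')
     ((#|H| * #|H|)%:R)^-1 * pair_count x z w * pair_count x z' w)) /=.
rewrite (eq_bigr (fun x => ((#|H| * #|H|)%:R)^-1 *
                             \sum_(w in S') pair_count x z w * pair_count x z' w)).
  rewrite -mulr_sumr pair_count_orthogonal // mulKf // pnatr_eq0 -lt0n muln_gt0 andbb.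
  exact: cardG_gt0.
by move=> x _; rewrite mulr_sumr; apply: eq_bigr => w _; rewrite mulrA.
Qed.

Theorem summand_of_free_orbit : is_summand_of_copies H H S l r S' l' r' #|S|.
Proof.
exists (fun j => inj_mx (enum_val j)), (fun j => proj_mx (enum_val j)).
by split=> [j|j|]; [apply: inj_mx_bihom | apply: proj_mx_bihom | apply: sum_inj_proj_mx].
Qed.

End FreeOrbitSummand.

Section SummandObstructions.
Local Open Scope ring_scope.

Lemma summand_intertwined_eq0 (gT : finGroupType) (A B : {set gT})
  (T : finType) (S : {set T}) (lS : gT -> T -> T) (rS : T -> gT -> T)
  (T' : finType) (S' : {set T'}) (lS' : gT -> T' -> T') (rS' : T' -> gT -> T')
  k (Z : 'M[algC]_#|S|) (Z' : 'M[algC]_#|S'|) :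
  is_summand_of_copies A B S lS rS S' lS' rS' k ->
  (forall M, is_bihom A B lS rS lS' rS' M -> Z *m M = M *m Z') -> Z' = 0 -> Z = 0.
Proof.
case=> f [p] [fh _ e] ZM Z'0.
rewrite -[Z]mulmx1 -e mulmx_sumr big1 // => j _.
by rewrite mulmxA ZM // Z'0 mulmx0 mul0mx.
Qed.

Variables (gT : finGroupType) (G H : {group gT}).
Hypothesis sHG : H \subset G.

Lemma class_translation_mxE (S D : {set gT}) i j :
  (\sum_(y in D) (actmx S (@lmulg gT y) - actmx S (@rmulg gT ^~ y))) i j =
  ((enum_val j * (enum_val i)^-1)%g \in D)%:R - (((enum_val i)^-1 * enum_val j)%g \in D)%:R.
Proof.
rewrite summxE (eq_bigr (fun y => (((enum_val j * (enum_val i)^-1)%g == y)%:R -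
                                  (((enum_val i)^-1 * enum_val j)%g == y)%:R))).
  by rewrite sumrB !sum_delta.
move=> y _; rewrite !mxE /lmulg /rmulg.
by congr ((nat_of_bool _)%:R - (nat_of_bool _)%:R);
  apply/eqP/eqP => <-; rewrite ?mulgK ?mulgKV ?mulKg ?mulKVg.
Qed.

(* The class sum of [h] in [CH] is central, so left minus right
   multiplication by it vanishes on [CH] but not on [CG] once [h^g \notin H]. *)
Lemma not_summand_depth1 h g : h \in H -> g \in G -> (h ^ g)%g \notin H ->
  forall k, ~ is_summand_of_copies H H G (@lmulg gT) (@rmulg gT) H (@lmulg gT) (@rmulg gT) k.
Proof.
move=> hH gG hgH k summ; pose D := (h ^: H)%g.
have sDH : D \subset H by apply: class_subG.
pose Z (S : {set gT}) := \sum_(y in D) (actmx S (@lmulg gT y) - actmx S (@rmulg gT ^~ y)).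
have hgG : (h * g)%g \in G by rewrite groupM // (subsetP sHG).
have : Z G != 0.
  apply/eqP => /matrixP/(_ (enum_rank_in gG g) (enum_rank_in gG (h * g)%g)).
  rewrite class_translation_mxE !mxE !enum_rankK_in // mulgK class_refl.
  have -> : ((g^-1 * (h * g))%g \in D) = false.
    by apply: contraNF hgH => /(subsetP sDH); rewrite conjgE.
  by move/eqP; rewrite subr0 oner_eq0.
apply/negP/negPn/eqP; apply: (summand_intertwined_eq0 (Z' := Z H) summ).
  move=> M [Ml Mr]; rewrite /Z mulmx_suml mulmx_sumr; apply: eq_bigr => y yD.
  by rewrite mulmxBl mulmxBr Ml ?Mr // (subsetP sDH).
apply/matrixP => i j; rewrite class_translation_mxE mxE.
have -> : ((enum_val i)^-1 * enum_val j = (enum_val j * (enum_val i)^-1) ^ enum_val i)%g.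
  by rewrite conjgE mulgKV.
by rewrite memJ_norm ?subrr // (subsetP (class_norm h H)) // (enum_valP i).
Qed.

End SummandObstructions.

Section Depth2Obstruction.
Local Open Scope ring_scope.
Variables (gT : finGroupType) (G H : {group gT}).
Hypothesis sHG : H \subset G.

Lemma tclass_ord1 (t : {ffun 'I_1 -> gT}) : tclass H t = [set t].
Proof.
apply/setP => u; rewrite inE; apply/imsetP/eqP => [[k kT ->]|->]; last first.
  by exists [ffun _ => 1%g]; rewrite ?twisters_const1 ?twist_const1.
move: kT; rewrite inE => /and3P[/eqP k0 /eqP km _].
apply/ffunP => i; rewrite ffunE.
have -> : widen_ord (leqnSn 1) i = ord0 by apply: val_inj; rewrite /= (ord1 i).
have -> : lift ord0 i = ord_max by apply: val_inj; rewrite /= (ord1 i).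
by rewrite k0 km invg1 mul1g mulg1.
Qed.

Lemma eq_ffun_ord1 (u v : {ffun 'I_1 -> gT}) : (u == v) = (u ord0 == v ord0).
Proof. by apply/eqP/eqP => [->|e] //; apply/ffunP=> i; rewrite (ord1 i). Qed.

Lemma tpow1P (z : {set {ffun 'I_1 -> gT}}) : z \in tpow G H 1 ->
  exists2 t : {ffun 'I_1 -> gT}, t ord0 \in G & z = [set t].
Proof.
case/imsetP => t; rewrite inE => /forallP tG ->.
by exists t; rewrite ?tclass_ord1.
Qed.

Lemma sum_tpow1_lr (z w : {set {ffun 'I_1 -> gT}}) h : h \in H ->
  z \in tpow G H 1 -> w \in tpow G H 1 ->
  \sum_(g in G) ((tpow_r (tpow_l g z) h == w)%:R : algC) = 1.
Proof.
move=> hH /tpow1P[t tG ->] /tpow1P[t' t'G ->].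
rewrite (eq_bigr (fun g => ((t' ord0 * (t ord0 * h)^-1)%g == g)%:R)).
  by rewrite sum_delta groupM ?groupV // groupM // (subsetP sHG).
move=> g _; rewrite /tpow_l /tpow_r !imset_set1 (inj_eq set1_inj) eq_ffun_ord1 !ffunE /=.
congr (nat_of_bool _)%:R; rewrite -mulgA.
by apply/eqP/eqP => <-; rewrite ?mulgK ?mulgKV.
Qed.

Let left_sum n := \sum_(g in G) actmx (tpow G H n) (@tpow_l gT n g).
Let ract n h := actmx (tpow G H n) ((@tpow_r gT n)^~ h).

Lemma left_sum_ractE n h i j :
  (left_sum n *m ract n h) i j
    = \sum_(g in G) ((tpow_r (tpow_l g (enum_val i)) h == enum_val j)%:R).
Proof.
rewrite mulmx_suml summxE; apply: eq_bigr => g gG.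
rewrite /ract [X in _ *m X]actmxE mul_actmx_setmx ?mxE // => z zS.
exact: mem_tpow_l.
Qed.

(* [G] acts regularly on the basis of [CG], so right multiplication by [h]
   is absorbed by the sum of the left translations. *)
Lemma left_sum_ract_tpow1 h : h \in H -> left_sum 1 *m ract 1 h = left_sum 1.
Proof.
move=> hH; apply/matrixP => i j; rewrite left_sum_ractE summxE.
rewrite [RHS](eq_bigr (fun g => ((tpow_r (tpow_l g (enum_val i)) 1%g == enum_val j)%:R)));
  last by move=> g _; rewrite mxE tpow_r1.
by rewrite !sum_tpow1_lr ?enum_valP.
Qed.

Definition tpair (y : gT) : {ffun 'I_2 -> gT} :=
  [ffun i => if val i == 0%N then 1%g else y].

Lemma tclass_tpair_moved y h g : h \notin (H :^ y)%g ->
  tpow_r (tpow_l g (tclass H (tpair y))) h != tclass H (tpair y).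
Proof.
move=> hHy; rewrite tpow_l_tclass tpow_r_tclass; apply/eqP => e.
have := tclass_refl H (trmul (tlmul g (tpair y)) h); rewrite e => /imsetP[k kT ek].
move: kT; rewrite inE => /and3P[/eqP k0 /eqP km /forallP kH].
have e0 := congr1 (fun f : {ffun 'I_2 -> gT} => f ord0) ek.
have e1 := congr1 (fun f : {ffun 'I_2 -> gT} => f (@ord_max 1)) ek.
move: e0 e1; rewrite !ffunE /=.
have -> : widen_ord (leqnSn 2) ord0 = ord0 by apply: val_inj.
have -> : lift ord0 (ord0 : 'I_2) = widen_ord (leqnSn 2) (@ord_max 1) by apply: val_inj.
have -> : lift ord0 (@ord_max 1) = ord_max by apply: val_inj.
rewrite k0 km invg1 !mulg1 mul1g => eg eyh; rewrite -eg in eyh.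
have hE : h = ((k (widen_ord (leqnSn 2) ord_max))^-1 ^ y)%g.
  by rewrite conjgE -eg -eyh mulKg.
by rewrite hE memJ_conjg groupV kH in hHy.
Qed.

Lemma not_summand_depth2 y h : y \in G -> h \in H -> h \notin (H :^ y)%g ->
  forall k, ~ is_summand_of_copies G H
       (tpow G H 2) (@tpow_l gT 2) (@tpow_r gT 2)
       (tpow G H 1) (@tpow_l gT 1) (@tpow_r gT 1) k.
Proof.
move=> yG hH hHy k summ.
have cS : tclass H (tpair y) \in tpow G H 2.
  apply: imset_f; rewrite inE; apply/forallP => i.
  by rewrite ffunE; case: ifP; rewrite ?group1.
have : left_sum 2 *m (1%:M - ract 2 h) != 0.
  apply/eqP => /matrixP/(_ (enum_rank_in cS (tclass H (tpair y)))
                            (enum_rank_in cS (tclass H (tpair y)))).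
  rewrite mulmxBr mulmx1 mxE [X in _ + X]mxE [X in _ = X]mxE left_sum_ractE.
  rewrite enum_rankK_in // big1 => [|g _]; last first.
    by rewrite (negPf (tclass_tpair_moved _ hHy)).
  rewrite subr0 summxE (bigD1 1%g) //= /actmx mxE enum_rankK_in // tpow_l1 eqxx => /eqP.
  rewrite gt_eqF // ltr_pwDl ?ltr01 // sumr_ge0 // => g _.
  by rewrite mxE ler0n.
apply/negP/negPn/eqP; apply: (summand_intertwined_eq0 (Z' := left_sum 1 *m (1%:M - ract 1 h)) summ).
  move=> M [Ml Mr].
  have sumM : left_sum 2 *m M = M *m left_sum 1.
    by rewrite mulmx_suml mulmx_sumr; apply: eq_bigr => g gG; apply: Ml.
  have subM : (1%:M - ract 2 h) *m M = M *m (1%:M - ract 1 h).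
    by rewrite mulmxBl mulmxBr mul1mx mulmx1 Mr.
  by rewrite -mulmxA subM mulmxA sumM mulmxA.
by rewrite mulmxBr mulmx1 left_sum_ract_tpow1 ?subrr.
Qed.

End Depth2Obstruction.

Lemma card_bigcup_leq_sum (I T : finType) (P : pred I) (F : I -> {set T}) :
  (#|\bigcup_(i | P i) F i| <= \sum_(i | P i) #|F i|)%N.
Proof.
elim/big_rec2: _ => [|i n U _ le]; first by rewrite cards0.
by rewrite (leq_trans (leq_card_setU _ _).1) ?leq_add2l.
Qed.

Section Base.
Variables (gT : finGroupType) (G H : {group gT}).
Hypothesis sHG : H \subset G.
Local Open Scope group_scope.

Definition fixed_cosets x := [set Hy in rcosets H G | Hy :* x == Hy].

Lemma permcharE x : permchar G H x = #|fixed_cosets x|.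
Proof. by []. Qed.

Lemma rcosetsM C g : g \in G -> C \in rcosets H G -> C :* g \in rcosets H G.
Proof.
move=> gG /rcosetsP[z zG ->]; apply/rcosetsP; exists (z * g); rewrite ?groupM //.
by rewrite rcosetM.
Qed.

Lemma permcharJ x g : g \in G -> permchar G H (x ^ g) = permchar G H x.
Proof.
move=> gG; rewrite !permcharE.
have inj : injective (fun C : {set gT} => C :* g^-1).
  by apply: (can_inj (g := fun C => C :* g)) => C /=; rewrite -rcosetM mulVg rcoset1.
suff -> : fixed_cosets x = (fun C => C :* g^-1) @: fixed_cosets (x ^ g).
  by rewrite card_imset.
apply/setP => D; apply/idP/imsetP => [|[C]].
  rewrite inE => /andP[DR /eqP e]; exists (D :* g).
    rewrite inE rcosetsM //=; apply/eqP.
    by rewrite -rcosetM conjgE mulKVg rcosetM e.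
  by rewrite -rcosetM mulgV rcoset1.
rewrite inE => /andP[CR /eqP e] ->; rewrite inE rcosetsM ?groupV //=; apply/eqP.
rewrite -[in RHS]e conjgE -!rcosetM; congr (_ :* _).
by rewrite !mulgA mulgK.
Qed.

Lemma Qsum_scaled t : (Qsum G H t * #|G : H|%:R ^+ t =
   (\sum_(g in G | prime #[g]) permchar G H g ^ t)%:R)%R.
Proof.
have n0 : (#|G : H|%:R != 0 :> rat)%R by rewrite pnatr_eq0 -lt0n indexg_gt0.
rewrite /Qsum mulr_suml natr_sum !big_mkcondr /=.
pose F g := (if prime #[g] then ((permchar G H g ^ t)%:R : rat) else 0)%R.
rewrite (eq_bigr F) => [|g _]; last by rewrite /F; case: ifP.
rewrite classfun.sum_by_classes => [|g h gG hG]; last by rewrite /F orderJ permcharJ.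
apply: eq_bigr => xG _; rewrite /F; case: ifP => _; last by rewrite mulr0.
by rewrite -mulrA -exprMn divfK // natrX.
Qed.

Lemma Qsum_lt1_count t : (Qsum G H t < 1)%R ->
  (\sum_(g in G | prime #[g]) #|fixed_cosets g| ^ t < #|G : H| ^ t)%N.
Proof.
move=> lt1; rewrite -(ltr_nat rat) -(Qsum_scaled t) natrX.
by rewrite -[X in (_ < X)%R]mul1r ltr_pM2r // exprn_gt0 // ltr0n indexg_gt0.
Qed.

Lemma exists_unfixed_tuple t : (Qsum G H t < 1)%R ->
  exists2 w : {ffun 'I_t -> {set gT}}, w \in ffun_on (rcosets H G) &
    forall g, g \in G -> prime #[g] -> w \notin ffun_on (fixed_cosets g).
Proof.
move=> /Qsum_lt1_count lt.
pose onto (A : {set {set gT}}) := [set w : {ffun 'I_t -> {set gT}} | w \in ffun_on A].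
have : ~~ (onto (rcosets H G) \subset \bigcup_(g in G | prime #[g]) onto (fixed_cosets g)).
  apply/negP => /subset_leq_card; rewrite cardsE card_ffun_on card_ord => le.
  have := leq_trans le (card_bigcup_leq_sum _ _).
  rewrite (eq_bigr (fun g => #|fixed_cosets g| ^ t)%N) => [|g _]; first by rewrite leqNgt lt.
  by rewrite cardsE card_ffun_on card_ord.
case/subsetPn => w; rewrite inE => wR notw; exists w => // g gG pg.
by apply: contra notw => wg; apply/bigcupP; exists g; rewrite ?inE ?gG.
Qed.

(* The cosets [H y_i] form a base of [G] acting on [G/H]: their pointwise
   stabiliser [\bigcap_i H^(y_i)] is trivial. *)
Definition is_base t (y : 'I_t -> gT) : Prop :=
  (forall i, y i \in G) /\ (forall x, x \in G -> (forall i, x \in H :^ y i) -> x = 1).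

Lemma rcoset_conjg_fixed y z : z \in H :^ y -> (H :* y) :* z = H :* y.
Proof.
by case/imsetP=> w wH ->; rewrite -rcosetM conjgE mulKVg rcosetM (rcoset_id wH).
Qed.

Lemma exists_base t : (Qsum G H t < 1)%R -> exists y : 'I_t -> gT, is_base y.
Proof.
case/exists_unfixed_tuple => w /ffun_onP wR unfixed.
have reprG i : repr (w i) \in G.
  case/rcosetsP: (wR i) => z zG ->; case/rcosetP: (mem_repr_rcoset H z) => u uH ->.
  by rewrite groupM // (subsetP sHG).
exists (fun i => repr (w i)); split=> [|x xG xstab]; first exact: reprG.
apply/eqP/negPn/negP => ntx.
have [z zx zp] := Cauchy (pdiv_prime (etrans (order_gt1 x) ntx)) (pdiv_dvd #[x]).
have zG : z \in G by apply: subsetP zx; rewrite cycle_subG.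
apply: (negP (unfixed z zG _)); first by rewrite zp pdiv_prime // order_gt1.
apply/ffun_onP => i; rewrite inE wR /=; apply/eqP.
have wE : H :* repr (w i) = w i.
  by case/rcosetsP: (wR i) => y _ ->; rewrite rcoset_repr.
by rewrite -wE rcoset_conjg_fixed //; apply: subsetP zx; rewrite cycle_subG xstab.
Qed.

End Base.

Section FreeOrbitFromBase.
Local Open Scope group_scope.

(* Solving the twisted equations one factor at a time gives
   [k_j = c_j a c_j^-1] for [0 < j <= m]; the last factor then yields [b]. *)
Lemma twist_chain (gT : finGroupType) (H : {group gT}) m (a b : gT) (k c : nat -> gT) :
  a \in H -> b \in H -> k 0 = 1 -> k m.+1 = 1 -> c 0 = 1 -> (forall j, k j \in H) ->
  (forall j, j <= m -> (k j)^-1 * (c j * (c j.+1)^-1) * k j.+1 =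
       (if j == 0 then a else 1) * (c j * (c j.+1)^-1) * (if j == m then b else 1)) ->
  (forall j, j <= m.+1 -> c j * a * (c j)^-1 \in H) /\ b^-1 = c m.+1 * a * (c m.+1)^-1.
Proof.
move=> aH bH k0 km c0 kH e.
have solve (x s z w : gT) : x^-1 * s * z = w -> z = s^-1 * x * w.
  by move<-; rewrite !mulgA mulgK mulVg mul1g.
pose K j := if j == 0 then a else k j.
have KA j : k j * (if j == 0 then a else 1) = K j.
  by case: j => [|j]; rewrite /K /= ?k0 ?mul1g ?mulg1.
have KE j : j <= m -> K j = c j * a * (c j)^-1.
  elim: j => [|j IH] jm; first by rewrite /K /= c0 invg1 mul1g mulg1.
  have := e j (ltnW jm); rewrite (ltn_eqF jm) mulg1 => /solve.
  rewrite -mulgA [X in _ * X]mulgA KA IH ?(ltnW jm) // /K /= => ->.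
  by rewrite !invMg !invgK !mulgA !mulgKV.
have bE : b^-1 = c m.+1 * a * (c m.+1)^-1.
  set s := c m * (c m.+1)^-1.
  have em := e m (leqnn m); rewrite eqxx km mulg1 in em.
  have sE : s = K m * s * b.
    apply: (mulgI (k m)^-1); rewrite em -KA !mulgA mulVg mul1g.
    by rewrite -/s.
  have sK : s * b^-1 = K m * s by rewrite {1}sE mulgK.
  have -> : b^-1 = s^-1 * (K m * s) by rewrite -sK mulKg.
  by rewrite KE // /s !invMg !invgK !mulgA !mulgKV.
split=> // j; rewrite leq_eqVlt ltnS => /orP[/eqP->|jm]; first by rewrite -bE groupV.
by rewrite -KE // /K; case: ifP.
Qed.

Variables (gT : finGroupType) (G H : {group gT}).
Hypothesis sHG : H \subset G.
Variables (m : nat) (y : 'I_m.+2 -> gT).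
Hypothesis yb : is_base G H y.

Let c i := y i * (y ord0)^-1.

Definition base_tuple : {ffun 'I_m.+1 -> gT} :=
  [ffun i => c (widen_ord (leqnSn _) i) * (c (lift ord0 i))^-1].

Lemma mem_base_tclass : tclass H base_tuple \in tpow G H m.+1.
Proof.
have yG := yb.1; apply: imset_f; rewrite inE; apply/forallP => i.
rewrite ffunE /c; apply: groupM; first by apply: groupM; rewrite ?groupV yG.
by rewrite groupV; apply: groupM; rewrite ?groupV yG.
Qed.

Lemma free_base_tclass a b : a \in H -> b \in H ->
  tpow_l a (tpow_r (tclass H base_tuple) b) = tclass H base_tuple -> a = 1 /\ b = 1.
Proof.
move=> aH bH; rewrite tpow_r_tclass tpow_l_tclass => e.
have := tclass_refl H (tlmul a (trmul base_tuple b)); rewrite e => /imsetP[k kT ek].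
move: kT; rewrite inE => /and3P[/eqP k0 /eqP km /forallP kH].
pose kj j := k (inord j); pose cj j := c (inord j).
have inord0 : inord 0 = ord0 :> 'I_m.+2 by apply: val_inj; rewrite /= inordK.
have [aJ bE] : (forall j, j <= m.+1 -> cj j * a * (cj j)^-1 \in H) /\
               b^-1 = cj m.+1 * a * (cj m.+1)^-1.
  apply: (@twist_chain gT H m a b kj cj) => //.
  - by rewrite /kj inord0.
  - by rewrite /kj (_ : inord m.+1 = ord_max) //; apply: val_inj; rewrite /= inordK.
  - by rewrite /cj /c inord0 mulgV.
  - by move=> j; apply: kH.
  - move=> j jm; pose i : 'I_m.+1 := inord j.
    have iE : i = j :> nat by rewrite /i inordK.
    have wi : widen_ord (leqnSn _) i = inord j.
      by apply: val_inj; rewrite /= iE inordK // ltnS leqW.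
    have li : lift ord0 i = inord j.+1.
      by apply: val_inj; rewrite /= /bump /= iE inordK // ltnS.
    have := congr1 (fun f : {ffun 'I_m.+1 -> gT} => f i) ek.
    rewrite !ffunE wi li (iE : val i = j) /= -/(kj j) -/(kj j.+1) -/(cj j) -/(cj j.+1) => <-.
    by case: (j == 0); case: (j == m); rewrite ?mul1g ?mulg1 ?mulgA.
have aHc i : a \in H :^ c i.
  have := aJ i (ltn_ord i); rewrite /cj inord_val => cJ.
  have -> : a = (c i * a * (c i)^-1) ^ c i by rewrite conjgE mulgKV mulKg.
  by rewrite memJ_conjg.
have a1 : a ^ y ord0 = 1.
  apply: yb.2 => [|i]; first by rewrite groupJ ?yb.1 // (subsetP sHG).
  by rewrite -[y i](mulgKV (y ord0)) conjsgM memJ_conjg aHc.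
have a_1 : a = 1 by apply/eqP; rewrite -(conjg_eq1 _ (y ord0)) a1.
subst a; split=> //; apply/eqP.
by rewrite -eq_invg1 bE mulg1 mulgV.
Qed.

End FreeOrbitFromBase.

Section Depth.
Variables (gT : finGroupType) (G H : {group gT}).
Hypothesis sHG : H \subset G.
Local Open Scope group_scope.

Lemma has_depth_of_base m (y : 'I_m.+2 -> gT) : is_base G H y -> has_depth G H (m.+1).*2.+1.
Proof.
move=> yb; right; right; exists m.+1; split=> //.
exists #|tpow G H m.+2|.
  apply/card_gt0P; exists (tclass H [ffun _ => 1]); apply: imset_f.
  by rewrite inE; apply/forallP => i; rewrite ffunE group1.
have lS n a z : a \in H -> z \in tpow G H n -> tpow_l a z \in tpow G H n.
  by move=> aH; apply: mem_tpow_l; apply: (subsetP sHG).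
have rS n a z : a \in H -> z \in tpow G H n -> tpow_r z a \in tpow G H n.
  exact: mem_tpow_r.
apply: (summand_of_free_orbit _ _ _ _ _ _ _ _ _ _ (lS _) (rS _) (lS _) (rS _)
          (mem_base_tclass yb) (free_base_tclass sHG yb)).
all: by move=> *; rewrite ?tpow_l1 ?tpow_lM ?tpow_r1 ?tpow_rM ?tpow_l_r.
Qed.

Lemma no_base_ord1 (y : 'I_1 -> gT) : H :!=: 1 -> ~ is_base G H y.
Proof.
case/trivgPn=> h hH nth [yG ybase].
have : h ^ y ord0 = 1.
  apply: ybase => [|i]; first by rewrite groupJ ?yG ?(subsetP sHG).
  by rewrite (ord1 i) memJ_conjg.
by apply/eqP; rewrite conjg_eq1.
Qed.

Lemma has_depth_of_Qsum t : 0 < t -> H :!=: 1 -> (Qsum G H t < 1)%R ->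
  exists m, t = m.+2 /\ has_depth G H (m.+1).*2.+1.
Proof.
move=> t_gt0 ntH /(exists_base sHG) [y yb].
case: t t_gt0 y yb => [|[|m]] // _ y yb; first by case: (no_base_ord1 ntH yb).
by exists m; split=> //; apply: has_depth_of_base yb.
Qed.

Lemma exists_conjg_notin : H :!=: 1 -> \bigcap_(g in G) H :^ g = 1 ->
  exists2 h, h \in H & exists2 g, g \in G & h \notin H :^ g.
Proof.
case/trivgPn=> h hH nth coreH; exists h => //.
apply/exists_inP; apply: contraR nth; rewrite negb_exists_in => /forall_inP hHg.
have : h \in \bigcap_(g in G) H :^ g by apply/bigcapP => g /hHg; rewrite negbK.
by rewrite coreH inE.
Qed.

Lemma no_depth_lt3 d : H :!=: 1 -> \bigcap_(g in G) H :^ g = 1 ->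
  0 < d < 3 -> ~ has_depth G H d.
Proof.
move=> ntH coreH /andP[d_gt0 d_lt3].
have [h hH [g gG hHg]] := exists_conjg_notin ntH coreH.
case=> [[_ [k _ summ]]|[[n [n_gt0 dE [k _ summ]]]|[n [n_gt0 dE _]]]].
- apply: (not_summand_depth1 sHG hH (groupVr gG) _ summ).
  by rewrite -(memJ_conjg H g) conjgKV.
- have n1 : n = 1%N by move: d_lt3; rewrite dE; case: n n_gt0 {dE summ} => [|[|n]].
  by subst n; apply: (not_summand_depth2 sHG gG hH hHg summ).
- by move: d_lt3; rewrite dE; case: n n_gt0 {dE} => [|n].
Qed.

End Depth.

Theorem proposition2p6 (gT : finGroupType) (G H : {group gT}) :
  H \subset G ->
  H != 1%G :> {set gT} ->
  \bigcap_(g in G) (H :^ g)%g = 1%g ->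
  (forall t : nat, (0 < t)%N -> (Qsum G H t < 1)%R ->
     exists2 d : nat, (0 < d <= t.*2.-1)%N & has_depth G H d) /\
  ((Qsum G H 2 < 1)%R ->
     has_depth G H 3 /\ (forall d : nat, (0 < d < 3)%N -> ~ has_depth G H d)).
Proof.
move=> sHG ntH coreH; split.
  move=> t t_gt0 /(has_depth_of_Qsum sHG t_gt0 ntH) [m [-> depth]].
  by exists (m.+1).*2.+1; rewrite //= !doubleS.
move=> /(has_depth_of_Qsum sHG (isT : 0 < 2) ntH) [[|m] [//= _ depth]].
by split=> // d; apply: no_depth_lt3.
Qed.
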